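(* Let $(L,\preceq)$ be a lattice and $\delta$ a local congruence on $L$. If two equivalence classes $[x]_\delta,[y]_\delta\in L/\delta$ satisfy $[x]_\delta\preceq_\delta[y]_\delta$ and $[y]_\delta\preceq_\delta[x]_\delta$ with $x_1\preceq y_1$ and $y_2\preceq x_2$ for some $x_1,x_2\in[x]_\delta$ and $y_1,y_2\in[y]_\delta$, then $[x]_\delta=[y]_\delta$.
   Context: For an equivalence relation $\delta$ on $L$, $[a]_\delta$ is the class of $a$ and $L/\delta$ the set of classes. A local congruence on a lattice $(L,\preceq)$ is an equivalence relation each of whose classes is a sublattice of $L$ and is convex (if $u,v$ are in the class and $u\preceq w\preceq v$, then $w$ is in the class). A $\delta$-sequence from $p_0$ to $p_n$ is a finite sequence $(p_0,p_1,\dots,p_n)$ of elements of $L$ with $n\ge1$ such that for each $i\in\{1,\dots,n\}$ either $(p_{i-1},p_i)\in\delta$ or $p_{i-1}\preceq p_i$. The relation $\preceq_\delta$ on $L/\delta$ is defined by $[x]_\delta\preceq_\delta[y]_\delta$ iff there exists a $\delta$-sequence from some $x'\in[x]_\delta$ to some $y'\in[y]_\delta$. *)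

From mathcomp Require Import all_boot all_order.
Set Implicit Arguments. Unset Strict Implicit. Unset Printing Implicit Defensive.
Import Order.LTheory.
Local Open Scope order_scope.

Section LocalCongruence.
Context {disp : Order.disp_t} {L : latticeType disp}.

Definition equivalence_rel (delta : L -> L -> Prop) : Prop :=
  (forall a, delta a a) /\
  (forall a b, delta a b -> delta b a) /\
  (forall a b c, delta a b -> delta b c -> delta a c).

Definition eqclass (delta : L -> L -> Prop) (a : L) : L -> Prop :=
  fun b => delta a b.

Definition local_congruence (delta : L -> L -> Prop) : Prop :=
  equivalence_rel delta /\
  (forall a u v, eqclass delta a u -> eqclass delta a v ->
     eqclass delta a (u `&` v) /\ eqclass delta a (u `|` v)) /\
  (forall a u v w, eqclass delta a u -> eqclass delta a v ->
     u <= w -> w <= v -> eqclass delta a w).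

Fixpoint dpath (delta : L -> L -> Prop) (p : L) (s : seq L) : Prop :=
  match s with
  | [::] => True
  | q :: s' => (delta p q \/ p <= q) /\ dpath delta q s'
  end.

Definition delta_seq (delta : L -> L -> Prop) (p q : L) : Prop :=
  exists s : seq L, s <> [::] /\ last p s = q /\ dpath delta p s.

Definition class_le (delta : L -> L -> Prop) (X Y : L -> Prop) : Prop :=
  exists x' y', X x' /\ Y y' /\ delta_seq delta x' y'.

End LocalCongruence.

From Pilot Require Import Defs.
From mathcomp Require Import all_boot all_order.
From Stdlib Require Import FunctionalExtensionality PropExtensionality.
Local Open Scope order_scope.
Import Order.LTheory.

(* The element w := (y1 | y2) & (x1 | x2) lies between the meet and the join of
   x1, x2 and also between those of y1, y2, so convexity of the sublattice
   classes puts w in both [x] and [y]; two classes sharing an element coincide. *)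

Section LocalCongruenceClasses.
Context {disp : Order.disp_t} {L : latticeType disp} {delta : L -> L -> Prop}.

Lemma meetUU_between (a1 a2 b1 b2 : L) :
  a1 <= b1 -> a1 `&` a2 <= (b1 `|` b2) `&` (a1 `|` a2) <= a1 `|` a2.
Proof.
move=> le_a1b1; rewrite leIr andbT lexI.
rewrite (le_trans (leIl _ _) (le_trans le_a1b1 (leUl _ _))).
exact: le_trans (leIl _ _) (leUl _ _).
Qed.

(* [Defs.] is needed because ssrbool's [equivalence_rel] shadows the one of Defs. *)
Lemma eqclass_eq {a b u : L} : Defs.equivalence_rel delta ->
  eqclass delta a u -> eqclass delta b u -> eqclass delta a = eqclass delta b.
Proof.
move=> [_ [delta_sym delta_trans]] au bu.
have ab : delta a b by apply: delta_trans au (delta_sym _ _ bu).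
apply: functional_extensionality => c; apply: propositional_extensionality.
by split; apply: delta_trans; [apply: delta_sym|].
Qed.

Lemma eqclass_between {a u v w : L} : local_congruence delta ->
  eqclass delta a u -> eqclass delta a v ->
  u `&` v <= w <= u `|` v -> eqclass delta a w.
Proof.
move=> [_ [sublattice convex]] au av /andP[le_uv_w le_w_uv].
have [auv auv'] := sublattice a u v au av.
exact: convex auv auv' le_uv_w le_w_uv.
Qed.

End LocalCongruenceClasses.

Theorem corollary4p6 (disp : Order.disp_t) (L : latticeType disp)
  (delta : L -> L -> Prop) (x y x1 x2 y1 y2 : L) :
  local_congruence delta ->
  class_le delta (eqclass delta x) (eqclass delta y) ->
  class_le delta (eqclass delta y) (eqclass delta x) ->
  eqclass delta x x1 -> eqclass delta x x2 ->
  eqclass delta y y1 -> eqclass delta y y2 ->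
  x1 <= y1 -> y2 <= x2 ->
  eqclass delta x = eqclass delta y.
Proof.
move=> delta_lc _ _ xx1 xx2 yy1 yy2 le_x1y1 le_y2x2.
set w := (y1 `|` y2) `&` (x1 `|` x2).
have xw : eqclass delta x w.
  exact: eqclass_between delta_lc xx1 xx2 (meetUU_between _ x2 _ y2 le_x1y1).
have yw : eqclass delta y w.
  have := meetUU_between _ y1 _ x1 le_y2x2.
  rewrite [w]meetC [y2 `&` _]meetC [y2 `|` y1]joinC [x2 `|` _]joinC.
  exact: eqclass_between delta_lc yy1 yy2.
exact: eqclass_eq delta_lc.1 xw yw.
Qed.
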